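(* Let $\mathcal{D}=(\mathcal{P},\mathcal{B},\mathcal{I})$ be a quasi-symmetric $(v,b,r,k,\lambda_1,0)$ SPBIBD of type $(k-1,t)$ with intersection numbers $x=0$ and $y=1$, let $\Gamma$ be its incidence graph, and assume $k\ge3$. Then: (i) $\Gamma$ is almost $2$-$\mathcal{P}$-homogeneous if and only if $\mathcal{D}$ is a generalized quadrangle; (ii) $\Gamma$ is not $2$-$\mathcal{P}$-homogeneous.
   Context: A design $\mathcal{D}=(\mathcal{P},\mathcal{B},\mathcal{I})$ is an incidence structure with $|\mathcal{P}|=v$, $|\mathcal{B}|=b$, every block incident with exactly $k$ points and every point with exactly $r$ blocks; standing assumptions: $v>k$ and $r<b$. $(p,B)$ is a flag if $p\in B$, a non-flag otherwise. $\mathcal{D}$ is a $(v,b,r,k,\lambda_1,\lambda_2)$ SPBIBD of type $(s,t)$ if (i) any two distinct points are together in exactly $\lambda_1$ or exactly $\lambda_2$ blocks; (ii) for every flag $(p,B)$, the number of points of $B$ other than $p$ lying with $p$ in exactly $\lambda_1$ blocks is $s$; (iii) for every non-flag $(p,B)$, the number of points of $B$ lying with $p$ in exactly $\lambda_1$ blocks is $t$. Quasi-symmetric with intersection numbers $x<y$: any two distinct blocks share exactly $x$ or $y$ points, both values occurring. A partial geometry is such a design in which any two points are together in at most one block and there is a constant $t'$ ($1\le t'\le r$, $1\le t'\le k$) such that for every non-flag $(p,B)$ exactly $t'$ blocks are incident with $p$ and meet $B$; it is a generalized quadrangle if $t'=1$. The incidence graph is the bipartite graph on $\mathcal{P}\cup\mathcal{B}$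 with $p\sim B$ iff $p\in B$. $\Gamma_i(u)$ is the set of vertices at distance $i$ from $u$, $\Gamma(u)=\Gamma_1(u)$. For a $(Y,Y')$-bipartite graph in which every vertex of $Y$ has eccentricity $D\ge3$: it is almost $2$-$Y$-homogeneous if for each $1\le i\le D-2$ the number $|\Gamma(x)\cap\Gamma(y)\cap\Gamma_{i-1}(z)|$ is the same for all $x\in Y$, $y\in\Gamma_2(x)$, $z\in\Gamma_i(x)\cap\Gamma_i(y)$; it is $2$-$Y$-homogeneous if this holds for each $1\le i\le D-1$. *)

From mathcomp Require Import all_boot.
Set Implicit Arguments. Unset Strict Implicit. Unset Printing Implicit Defensive.

Section Designs.
Variables (P B : finType) (inc : P -> B -> bool).

Definition lam (p q : P) : nat := #|[set B0 | inc p B0 && inc q B0]|.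
Definition bmeet (B1 B2 : B) : nat := #|[set p | inc p B1 && inc p B2]|.

Definition is_design (v b r k : nat) : Prop :=
  [/\ #|P| = v, #|B| = b,
      (forall B0 : B, #|[set p | inc p B0]| = k),
      (forall p : P, #|[set B0 | inc p B0]| = r) &
      (k < v /\ r < b)].

Definition is_SPBIBD (v b r k l1 l2 s t : nat) : Prop :=
  [/\ is_design v b r k,
      (forall p q : P, p != q -> lam p q = l1 \/ lam p q = l2),
      (forall (p : P) (B0 : B), inc p B0 ->
          #|[set q | [&& inc q B0, q != p & lam p q == l1]]| = s) &
      (forall (p : P) (B0 : B), ~~ inc p B0 ->
          #|[set q | inc q B0 && (lam p q == l1)]| = t)].

Definition quasi_symmetric (x y : nat) : Prop :=
  [/\ x < y,
      (forall B1 B2 : B, B1 != B2 -> bmeet B1 B2 = x \/ bmeet B1 B2 = y),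
      (exists B1 B2 : B, B1 != B2 /\ bmeet B1 B2 = x) &
      (exists B1 B2 : B, B1 != B2 /\ bmeet B1 B2 = y)].

Definition is_partial_geometry (v b r k t' : nat) : Prop :=
  [/\ is_design v b r k,
      (forall p q : P, p != q -> lam p q <= 1),
      1 <= t' <= r, 1 <= t' <= k &
      (forall (p : P) (B0 : B), ~~ inc p B0 ->
         #|[set B1 | inc p B1 && [exists q, inc q B1 && inc q B0]]| = t')].

Definition is_GQ (v b r k : nat) : Prop := is_partial_geometry v b r k 1.

Definition inc_graph : rel (P + B)%type := fun u w =>
  match u, w with
  | inl p, inr B0 => inc p B0
  | inr B0, inl p => inc p B0
  | _, _ => false
  end.

Definition point_vertices : {set (P + B)%type} :=
  [set u | if u is inl _ then true else false].

End Designs.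

Section Graphs.
Variables (T : finType) (e : rel T).

Fixpoint reach (n : nat) (u w : T) : bool :=
  match n with
  | 0 => u == w
  | n'.+1 => [exists z, e u z && reach n' z w]
  end.

Definition Gam (i : nat) (u : T) : {set T} :=
  [set w | reach i u w && [forall j : 'I_i, ~~ reach j u w]].

Definition nbr (u : T) : {set T} := [set w | e u w].

Definition ecc_is (u : T) (D : nat) : Prop :=
  (forall w, exists2 i, i <= D & w \in Gam i u) /\ (exists w, w \in Gam D u).

Definition hom_cond (Y : {set T}) (m : nat) : Prop :=
  forall i, 1 <= i <= m -> exists c : nat,
    forall x y z, x \in Y -> y \in Gam 2 x -> z \in Gam i x -> z \in Gam i y ->
      #|nbr x :&: nbr y :&: Gam i.-1 z| = c.

Definition almost_2_hom (Y : {set T}) : Prop :=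
  exists D, 3 <= D /\ (forall x, x \in Y -> ecc_is x D) /\ hom_cond Y (D - 2).

Definition two_hom (Y : {set T}) : Prop :=
  exists D, 3 <= D /\ (forall x, x \in Y -> ecc_is x D) /\ hom_cond Y (D - 1).

End Graphs.

From mathcomp Require Import all_boot zify.
Set Implicit Arguments. Unset Strict Implicit. Unset Printing Implicit Defensive.

(* Quasi-symmetry with intersection numbers 0 and 1 makes the design a partial
   linear space, and the type (k - 1, t) with t > 0 makes every point collinear
   with some point of every block.  In the incidence graph the common neighbours
   of two collinear points x, y are then just their line L, so for z at distance
   i from both the count |G(x) & G(y) & G_(i-1)(z)| is 1 or 0 according as L lies
   in G_(i-1)(z).  For i = 2 it is 1 for a third point of L and 0 for a point off
   L collinear with x and y: homogeneity at i = 2 is exactly the absence of such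
   triangles, i.e. the generalized quadrangle axiom.  A non-collinear pair of
   points forces eccentricity D >= 4, so almost 2-homogeneity covers i = 2.  For
   2-homogeneity, D <= 3 would make all points pairwise collinear and create a
   triangle, so D >= 4 and i = 3 is covered; but a block through a third point
   of L and a block disjoint from L (which exists when there are no triangles)
   are both at distance 3 from x and y, with counts 1 and 0. *)

Section Distance.
Variables (T : finType) (e : rel T).

Lemma reach1 (u w : T) : reach e 1 u w = e u w.
Proof.
apply/existsP/idP => [[z /andP[euz /eqP <-]] // | euw].
by exists w; rewrite euw /= eqxx.
Qed.

Lemma reachD m n (u z w : T) : reach e m u z -> reach e n z w -> reach e (m + n) u w.
Proof.
elim: m u => [|m IH] u /=; first by move/eqP->.
case/existsP=> u' /andP[euu' u'z] zw.
by apply/existsP; exists u'; rewrite euu' (IH _ u'z zw).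
Qed.

Lemma GamP i (u w : T) :
  reflect (reach e i u w /\ forall j, j < i -> ~~ reach e j u w) (w \in Gam e i u).
Proof.
rewrite inE; apply: (iffP andP) => [[-> /forallP nr] | [-> nr]]; split=> //.
  by move=> j ji; apply: (nr (Ordinal ji)).
by apply/forallP => j; apply: nr.
Qed.

Lemma reach_Gam n (u w : T) : reach e n u w -> exists2 i, i <= n & w \in Gam e i u.
Proof.
move=> rn; have ex_r : exists i, reach e i u w by exists n.
case: (ex_minnP ex_r) => i ri min_i; exists i; first exact: min_i.
by apply/GamP; split=> // j ji; apply/negP => /min_i; rewrite leqNgt ji.
Qed.

Lemma Gam0 (u w : T) : (w \in Gam e 0 u) = (w == u).
Proof. by rewrite eq_sym; apply/GamP/idP => [[] | uw]. Qed.

Lemma Gam1 : irreflexive e -> forall u w : T, (w \in Gam e 1 u) = e u w.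
Proof.
move=> irr u w; rewrite -reach1; apply/GamP/idP => [[] // | ru]; split=> // -[|//] _.
by apply: contraTN ru => /eqP <-; rewrite reach1 irr.
Qed.

End Distance.

Section IncidenceGraph.
Variables (P B : finType) (inc : P -> B -> bool).
Local Notation e := (inc_graph inc).

Definition collinear (p q : P) : bool := [exists C, inc p C && inc q C].

Lemma collinearI p q C : inc p C -> inc q C -> collinear p q.
Proof. by move=> pC qC; apply/existsP; exists C; rewrite pC. Qed.

Lemma lam_gt0 p q : (0 < lam inc p q) = collinear p q.
Proof. by apply/card_gt0P/existsP => -[C CP]; exists C; move: CP; rewrite ?inE. Qed.

Definition is_block (u : P + B) : bool := if u is inr _ then true else false.

Lemma inc_graph_irr : irreflexive e.
Proof. by case. Qed.

Lemma inl_in_points p : inl p \in point_vertices P B.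
Proof. by rewrite inE. Qed.

Lemma reach_parity n (u w : P + B) : reach e n u w -> odd n = (is_block u != is_block w).
Proof.
elim: n u => [|n IH] u /=; first by move/eqP->; rewrite eqxx.
case/existsP=> z /andP[euz /IH ->].
by case: u z euz => [p|C] [q|C'] //= _; case: (is_block w).
Qed.

Lemma reach2_points p q : reach e 2 (inl p) (inl q) = collinear p q.
Proof.
apply/existsP/existsP => [[[p'|C] //= /andP[pC /existsP[[q'|C'] //= /andP[qC /eqP[<-]]]]]
                          | [C /andP[pC qC]]].
  by exists C; rewrite pC.
by exists (inr C); rewrite /= pC; apply/existsP; exists (inl q); rewrite /= qC eqxx.
Qed.

Lemma reach2_blocks C C' : reach e 2 (inr C) (inr C') = [exists q, inc q C && inc q C'].
Proof.
apply/existsP/existsP => [[[p|C0] //= /andP[pC /existsP[[q|C1] //= /andP[pC1 /eqP[<-]]]]]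
                          | [q /andP[qC qC']]].
  by exists p; rewrite pC.
by exists (inl q); rewrite /= qC; apply/existsP; exists (inr C'); rewrite /= qC' eqxx.
Qed.

Lemma Gam2_points p q : (inl q \in Gam e 2 (inl p)) = (p != q) && collinear p q.
Proof.
rewrite -reach2_points; apply/GamP/andP => [[-> /(_ 0 isT)] // | [pq r2]].
split=> // -[|[|//]] _ //; by rewrite reach1.
Qed.

Lemma Gam2_blocks C C' :
  (inr C' \in Gam e 2 (inr C)) = (C != C') && [exists q, inc q C && inc q C'].
Proof.
rewrite -reach2_blocks; apply/GamP/andP => [[-> /(_ 0 isT)] // | [CC' r2]].
split=> // -[|[|//]] _ //; by rewrite reach1.
Qed.

Lemma Gam2_point p w : w \in Gam e 2 (inl p) -> exists q, w = inl q.
Proof. by case: w => [q _|C /GamP[/reach_parity]] //; exists q. Qed.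

Lemma Gam3_point_block p C :
  ~~ inc p C -> reach e 3 (inl p) (inr C) -> inr C \in Gam e 3 (inl p).
Proof.
move=> pC r3; apply/GamP; split=> // -[|[|[|//]]] _ //; first by rewrite reach1.
by apply/negP => /reach_parity.
Qed.

Lemma Gam4_points p q : p != q -> ~~ collinear p q ->
  reach e 4 (inl p) (inl q) -> inl q \in Gam e 4 (inl p).
Proof.
move=> pq npq r4; apply/GamP; split=> // -[|[|[|[|//]]]] _ //.
- by rewrite reach1.
- by rewrite reach2_points.
- by apply/negP => /reach_parity.
Qed.

Lemma ecc_le3_collinear p q D :
  ecc_is e (inl p) D -> D <= 3 -> p != q -> collinear p q.
Proof.
move=> [/(_ (inl q)) [i iD qi] _] D3 pq.
case: i iD qi => [|[|[|[|i]]]] iD qi.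
- by move: qi; rewrite Gam0 => /eqP[qp]; rewrite qp eqxx in pq.
- by rewrite (Gam1 inc_graph_irr) in qi.
- by rewrite Gam2_points in qi; case/andP: qi.
- by case/GamP: qi => /reach_parity.
- by have := leq_trans iD D3.
Qed.

End IncidenceGraph.

Section PartialLinearSpace.
Variables (P B : finType) (inc : P -> B -> bool).
Local Notation e := (inc_graph inc).
Local Notation Y := (point_vertices P B).
Local Notation collinear := (collinear inc).

Hypothesis linear : forall p q C C',
  p != q -> inc p C -> inc q C -> inc p C' -> inc q C' -> C = C'.
Hypothesis block_gt2 : forall C, 2 < #|[set p | inc p C]|.
Hypothesis point_gt1 : forall p, 1 < #|[set C | inc p C]|.
Hypothesis nonflag_collinear : forall p C, ~~ inc p C -> exists2 q, inc q C & collinear p q.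

Definition triangle_free : Prop := forall x y z L,
  x != y -> inc x L -> inc y L -> collinear x z -> collinear y z -> inc z L.

Lemma block_other_point C x y : exists2 w, inc w C & (x != w) && (y != w).
Proof.
have : ~~ ([set p | inc p C] \subset [set x; y]).
  apply: contraL (block_gt2 C) => /subset_leq_card le_Cxy.
  by rewrite -leqNgt (leq_trans le_Cxy) // cards2; case: (_ != _).
by case/subsetPn => w; rewrite !inE => wC /norP[wx wy]; exists w; rewrite // !(eq_sym _ w) wx.
Qed.

Lemma point_other_block p L : exists2 M, inc p M & M != L.
Proof.
have : ~~ ([set C | inc p C] \subset [set L]).
  apply: contraL (point_gt1 p) => /subset_leq_card le_pL.
  by rewrite -leqNgt (leq_trans le_pL) // cards1.
by case/subsetPn => M; rewrite !inE => pM ML; exists M.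
Qed.

Lemma block_two_points L : exists x y, [/\ inc x L, inc y L & x != y].
Proof.
have /card_gt1P[x [y [xL yL xy]]] := ltnW (block_gt2 L).
by exists x, y; rewrite !inE in xL yL.
Qed.

Lemma point_on_block p : exists C, inc p C.
Proof. by have /card_gt0P[C] := ltnW (point_gt1 p); rewrite inE; exists C. Qed.

Lemma Gam2_collinear p q C : p != q -> inc p C -> inc q C -> inl q \in Gam e 2 (inl p).
Proof. by move=> pq pC qC; rewrite Gam2_points pq (collinearI pC qC). Qed.

Lemma Gam3_nonflag p C : ~~ inc p C -> inr C \in Gam e 3 (inl p).
Proof.
move=> pC; have [q qC /existsP[C' /andP[pC' qC']]] := nonflag_collinear pC.
apply: Gam3_point_block pC _.
apply: (@reachD _ _ 2 1 _ (inl q)); last by rewrite reach1.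
by rewrite reach2_points (collinearI pC' qC').
Qed.

Lemma reach_le4 p w : exists2 n, n <= 4 & reach e n (inl p) w.
Proof.
have r2 q C : inc p C -> inc q C -> reach e 2 (inl p) (inl q).
  by move=> pC qC; rewrite reach2_points (collinearI pC qC).
case: w => [q|C].
  have [C qC] := point_on_block q.
  have [pC|/nonflag_collinear[q' q'C /existsP[C' /andP[pC' q'C']]]] := boolP (inc p C).
    by exists 2; last exact: r2 pC qC.
  exists 4 => //; apply: (@reachD _ _ 2 2 _ (inl q')); first exact: r2 pC' q'C'.
  by rewrite reach2_points (collinearI q'C qC).
have [pC|/nonflag_collinear[q' q'C /existsP[C' /andP[pC' q'C']]]] := boolP (inc p C).
  by exists 1; rewrite ?reach1.
by exists 3 => //; apply: (@reachD _ _ 2 1 _ (inl q')); [exact: r2 pC' q'C' | rewrite reach1].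
Qed.

Lemma common_nbr_line x y L : x != y -> inc x L -> inc y L ->
  nbr e (inl x) :&: nbr e (inl y) = [set inr L].
Proof.
move=> xy xL yL; apply/setP => -[q|C]; rewrite !inE //=.
apply/andP/eqP => [[xC yC] | [->]]; last by split.
by rewrite (linear xy xC yC xL yL).
Qed.

Lemma card_common_nbr_Gam x y L i z : x != y -> inc x L -> inc y L ->
  #|nbr e (inl x) :&: nbr e (inl y) :&: Gam e i z| = (inr L \in Gam e i z).
Proof.
move=> xy xL yL; rewrite (common_nbr_line xy xL yL).
case: (boolP (inr L \in Gam e i z)) => Li.
  by rewrite (setIidPl _) ?cards1 ?sub1set.
by apply/eqP; rewrite cards_eq0 setI_eq0 disjoints1.
Qed.

Lemma hom_cond_triangle_free m : 1 < m -> hom_cond e Y m -> triangle_free.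
Proof.
move=> m_gt1 hom x y z L xy xL yL xz yz; apply/negPn/negP => zL.
have [c count] := hom 2 m_gt1.
have count_on_L w : inl w \in Gam e 2 (inl x) -> inl w \in Gam e 2 (inl y) -> c = inc w L.
  move=> xw yw; rewrite -(count _ _ _ (inl_in_points B x) (Gam2_collinear xy xL yL) xw yw).
  by rewrite (card_common_nbr_Gam _ _ xy xL yL) (Gam1 (inc_graph_irr inc)).
have [w wL /andP[xw yw]] := block_other_point L x y.
have c1 : c = 1.
  by rewrite (count_on_L w (Gam2_collinear xw xL wL) (Gam2_collinear yw yL wL)) wL.
have x_ne_z : x != z by apply: contraNneq zL => <-.
have y_ne_z : y != z by apply: contraNneq zL => <-.
have c0 : c = 0.
  by rewrite (count_on_L z) ?Gam2_points ?x_ne_z ?y_ne_z ?xz ?yz ?(negbTE zL).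
by rewrite c1 in c0.
Qed.

Lemma triangle_free_ecc4 p : triangle_free -> ecc_is e (inl p) 4.
Proof.
move=> tf; split.
  move=> w; have [n n4 /reach_Gam[i i_n wi]] := reach_le4 p w.
  by exists i; first exact: leq_trans n4.
have [L pL] := point_on_block p.
have [y yL /andP[py _]] := block_other_point L p p.
have [N yN NL] := point_other_block y L.
have [z zN /andP[yz _]] := block_other_point N y y.
have zL : ~~ inc z L.
  by apply: contra NL => zL; apply/eqP; apply: linear yz yN zN yL zL.
have pz : p != z by apply: contraNneq zL => <-.
have npz : ~~ collinear p z.
  by apply: contra zL => pz_col; apply: tf py pL yL pz_col (collinearI yN zN).
exists (inl z); apply: Gam4_points pz npz _.
apply: (@reachD _ _ 2 2 _ (inl y)); rewrite reach2_points.
  exact: collinearI pL yL.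
exact: collinearI yN zN.
Qed.

Lemma triangle_free_hom_cond2 : triangle_free -> hom_cond e Y 2.
Proof.
move=> tf [|[|[|//]]] // _; exists 1.
  move=> x y z _ _; rewrite !(Gam1 (inc_graph_irr inc)) => xz yz.
  have -> : nbr e x :&: nbr e y :&: Gam e 0 z = [set z].
    apply/setP => u; rewrite !in_setI Gam0 !inE.
    by case: eqP => [->|]; rewrite ?xz ?yz ?andbF.
  exact: cards1.
move=> [p|C] y z; last by rewrite inE.
move=> _ py; have [q Ey] := Gam2_point py; subst y.
move=> pz; have [w Ez] := Gam2_point pz; subst z.
move: py pz; rewrite !Gam2_points => /andP[pq /existsP[L /andP[pL qL]]] /andP[_ pw] /andP[_ qw].
by rewrite (card_common_nbr_Gam _ _ pq pL qL) (Gam1 (inc_graph_irr inc)) /= (tf p q w L).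
Qed.

Lemma triangle_free_almost_2_hom : triangle_free -> almost_2_hom e Y.
Proof.
move=> tf; exists 4; split=> //; split; last exact: triangle_free_hom_cond2.
by move=> [p _|C]; [exact: triangle_free_ecc4 | rewrite inE].
Qed.

Lemma almost_2_hom_triangle_free p q : p != q -> ~~ collinear p q ->
  almost_2_hom e Y -> triangle_free.
Proof.
move=> pq npq [D [_ [ecc hom]]]; apply: (hom_cond_triangle_free _ hom).
suff : 3 < D by lia.
rewrite ltnNge; apply: contra npq => D3.
exact: ecc_le3_collinear (ecc _ (inl_in_points B p)) D3 pq.
Qed.

Lemma triangle_free_disjoint_block L : triangle_free ->
  exists N, forall u, inc u N -> ~~ inc u L.
Proof.
move=> tf; have [x [_ [xL _ _]]] := block_two_points L.
have [M xM ML] := point_other_block x L.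
have [m mM /andP[xm _]] := block_other_point M x x.
have [N mN NM] := point_other_block m M.
exists N => u uN; apply/negP => uL.
have [xu|xu] := eqVneq x u.
  by move: NM; rewrite -xu in uN; rewrite (linear xm uN mN xM mM) eqxx.
have mL : inc m L by apply: tf xu xL uL (collinearI xM mM) (collinearI uN mN).
by move: ML; rewrite (linear xm xM mM xL mL) eqxx.
Qed.

Lemma not_two_hom L z : ~~ inc z L -> ~ two_hom e Y.
Proof.
move=> zL [D [D3 [ecc hom]]].
have tf : triangle_free by apply: (hom_cond_triangle_free _ hom); lia.
have [x [y [xL yL xy]]] := block_two_points L.
have D4 : 3 < D.
  rewrite ltnNge; apply/negP => D_le3.
  have col a : inc a L -> collinear a z.
    move=> aL; apply: ecc_le3_collinear (ecc _ (inl_in_points B a)) D_le3 _.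
    by apply: contraNneq zL => <-.
  by move: zL; rewrite (tf x y z L xy xL yL (col x xL) (col y yL)).
have [c count] := hom 3 (ltac:(lia)).
have count_L Z : ~~ inc x Z -> ~~ inc y Z -> c = (inr L \in Gam e 2 (inr Z)).
  move=> xZ yZ; rewrite -(card_common_nbr_Gam _ _ xy xL yL).
  by rewrite (count _ _ _ (inl_in_points B x) (Gam2_collinear xy xL yL)
    (Gam3_nonflag xZ) (Gam3_nonflag yZ)).
have [w wL /andP[xw yw]] := block_other_point L x y.
have [Z wZ ZL] := point_other_block w L.
have off_Z a : a != w -> inc a L -> ~~ inc a Z.
  by move=> aw aL; apply: contra ZL => aZ; apply/eqP; apply: linear aw aZ wZ aL wL.
have [N N_L] := triangle_free_disjoint_block L tf.
have off_N a : inc a L -> ~~ inc a N by move=> aL; apply: contraL aL; apply: N_L.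
have LZ : inr L \in Gam e 2 (inr Z).
  by rewrite Gam2_blocks ZL; apply/existsP; exists w; rewrite wZ.
have LN : inr L \notin Gam e 2 (inr N).
  rewrite Gam2_blocks negb_and orbC; apply/orP; left.
  by apply/existsPn => u; apply/andP => -[/N_L nuL uL]; rewrite uL in nuL.
move: (count_L Z (off_Z x xw xL) (off_Z y yw yL)) (count_L N (off_N x xL) (off_N y yL)).
by rewrite LZ (negbTE LN) => ->.
Qed.

Lemma triangle_free_GQ v b r k : is_design inc v b r k -> triangle_free -> is_GQ inc v b r k.
Proof.
move=> des tf; have [cardP _ cardB cardr [kv _]] := des.
have /card_gt0P[p0 _] : 0 < #|P| by rewrite cardP; apply: leq_ltn_trans kv.
have [C0 _] := point_on_block p0.
split=> //.
- move=> p q pq; apply/card_le1_eqP => C C'; rewrite !inE => /andP[pC qC] /andP[pC' qC'].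
  exact: linear pq pC' qC' pC qC.
- by rewrite -(cardr p0) /=; apply: ltnW (point_gt1 p0).
- by rewrite -(cardB C0) /=; apply: ltnW (ltnW (block_gt2 C0)).
move=> p C pC; apply/eqP; rewrite eqn_leq; apply/andP; split.
  apply/card_le1_eqP => C1 C2; rewrite !inE.
  move=> /andP[pC1 /existsP[q1 /andP[q1C1 q1C]]] /andP[pC2 /existsP[q2 /andP[q2C2 q2C]]].
  have pq1 : p != q1 by apply: contraNneq pC => ->.
  have [q12|q12] := eqVneq q1 q2.
    by rewrite -q12 in q2C2; apply: linear pq1 pC2 q2C2 pC1 q1C1.
  by move: pC; rewrite (tf q1 q2 p C q12 q1C q2C (collinearI q1C1 pC1) (collinearI q2C2 pC2)).
have [q qC /existsP[C' /andP[pC' qC']]] := nonflag_collinear pC.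
by apply/card_gt0P; exists C'; rewrite inE pC'; apply/existsP; exists q; rewrite qC'.
Qed.

Lemma GQ_triangle_free v b r k : is_GQ inc v b r k -> triangle_free.
Proof.
case=> _ _ _ _ one_line x y z L xy xL yL /existsP[C1 /andP[xC1 zC1]] /existsP[C2 /andP[yC2 zC2]].
apply/negPn/negP => zL.
have C12 : C1 != C2.
  apply: contraNneq zL => C12; rewrite -C12 in yC2.
  by rewrite -(linear xy xC1 yC2 xL yL).
have /subset_leq_card : [set C1; C2] \subset [set C | inc z C && [exists q, inc q C && inc q L]].
  apply/subsetP => C; rewrite !inE => /orP[] /eqP ->; apply/andP; split=> //; apply/existsP.
  - by exists x; rewrite xC1.
  - by exists y; rewrite yC2.
by rewrite cards2 C12 (one_line z L zL).
Qed.

End PartialLinearSpace.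

Section QuasiSymmetricSPBIBD.
Variables (P B : finType) (inc : P -> B -> bool) (v b r k l1 t : nat).
Hypothesis spbibd : is_SPBIBD inc v b r k l1 0 (k - 1) t.
Hypothesis qsym : quasi_symmetric inc 0 1.
Hypothesis k_gt2 : 2 < k.

Lemma quasi_symmetric01_linear p q C C' :
  p != q -> inc p C -> inc q C -> inc p C' -> inc q C' -> C = C'.
Proof.
case: qsym => _ meet01 _ _ pq pC qC pC' qC'; apply/eqP; apply: contraT => CC'.
have : #|[set p; q]| <= bmeet inc C C'.
  by apply/subset_leq_card/subsetP => u; rewrite !inE => /pred2P[] ->; apply/andP.
by rewrite cards2 pq; case: (meet01 _ _ CC') => ->.
Qed.

Lemma block_card C : #|[set p | inc p C]| = k.
Proof. by case: spbibd => -[]. Qed.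

Lemma blocks_meet_in_one_point :
  exists C C' p, [/\ C != C', inc p C, inc p C' & bmeet inc C C' = 1].
Proof.
case: qsym => _ _ _ [C [C' [CC' meet1]]].
have /card_gt0P[p] : 0 < bmeet inc C C' by rewrite meet1.
by rewrite inE => /andP[pC pC']; exists C, C', p.
Qed.

Lemma point_card_gt1 p : 1 < #|[set C | inc p C]|.
Proof.
have [C [C' [p0 [CC' p0C p0C' _]]]] := blocks_meet_in_one_point.
case: spbibd => -[_ _ _ cardr _] _ _ _; rewrite cardr -(cardr p0).
by apply/card_gt1P; exists C, C'; rewrite !inE p0C p0C'.
Qed.

(* With s = k - 1 the flag condition counts every other point of the block. *)
Lemma lam_block p q C : inc p C -> inc q C -> p != q -> lam inc p q = l1.
Proof.
move=> pC qC pq; case: spbibd => _ _ flag _.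
have flagC := flag p C pC.
have sub : [set q0 | [&& inc q0 C, q0 != p & lam inc p q0 == l1]] \subset [set q0 | inc q0 C] :\ p.
  by apply/subsetP => u; rewrite !inE => /and3P[-> -> _].
have card_C_p : #|[set q0 | inc q0 C] :\ p| = k - 1.
  by have := cardsD1 p [set q0 | inc q0 C]; rewrite block_card inE pC; lia.
have := subset_cardP (etrans flagC (esym card_C_p)) sub q.
by rewrite !inE qC eq_sym pq /= => /eqP.
Qed.

Lemma l1_gt0 : 0 < l1.
Proof.
have [C _] := blocks_meet_in_one_point.
have /card_gt1P[p [q [pC qC pq]]] : 1 < #|[set p | inc p C]| by rewrite block_card ltnW.
rewrite !inE in pC qC.
by rewrite -(lam_block pC qC pq) lam_gt0 (collinearI pC qC).
Qed.

Lemma t_gt0 : 0 < t.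
Proof.
have [C [C' [p0 [_ p0C p0C' meet1]]]] := blocks_meet_in_one_point.
have /subsetPn[q] : ~~ ([set p | inc p C'] \subset [set p | inc p C && inc p C']).
  apply: contraL k_gt2 => /subset_leq_card; rewrite block_card -/(bmeet inc C C') meet1.
  by move=> k_le1; rewrite -leqNgt (leq_trans k_le1).
rewrite !inE => qC' /nandP[qC|]; last by rewrite qC'.
case: spbibd => _ _ _ nonflag; rewrite -(nonflag q C qC).
have qp0 : q != p0 by apply: contraNneq qC => ->.
by apply/card_gt0P; exists p0; rewrite !inE p0C (lam_block qC' p0C' qp0) eqxx.
Qed.

Lemma spbibd_nonflag_collinear p C : ~~ inc p C -> exists2 q, inc q C & collinear inc p q.
Proof.
move=> pC; case: spbibd => _ _ _ nonflag.
have /card_gt0P[q] : 0 < #|[set q | inc q C && (lam inc p q == l1)]|.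
  by rewrite nonflag //; exact: t_gt0.
by rewrite inE => /andP[qC /eqP lam_pq]; exists q; rewrite // -lam_gt0 lam_pq l1_gt0.
Qed.

Lemma exists_nonflag : exists (C : B) (p : P), ~~ inc p C.
Proof.
have [C _] := blocks_meet_in_one_point.
case: spbibd => -[cardP _ _ _ [kv _]] _ _ _.
have /subsetPn[p _ pC] : ~~ ([set: P] \subset [set p | inc p C]).
  by apply: contraL kv => /subset_leq_card; rewrite cardsT cardP block_card -leqNgt.
by exists C, p; rewrite inE in pC.
Qed.

End QuasiSymmetricSPBIBD.

Theorem proposition4p8 (P B : finType) (inc : P -> B -> bool)
    (v b r k l1 t : nat) :
  is_SPBIBD inc v b r k l1 0 (k - 1) t ->
  quasi_symmetric inc 0 1 ->
  3 <= k ->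
  ( ((exists p q : P, p != q /\ lam inc p q = l1) /\
     (exists p q : P, p != q /\ lam inc p q = 0)) ->
    (almost_2_hom (inc_graph inc) (point_vertices P B) <-> is_GQ inc v b r k) )
  /\ ~ two_hom (inc_graph inc) (point_vertices P B).
Proof.
move=> spbibd qsym k_gt2.
have linear := quasi_symmetric01_linear qsym.
have block_gt2 C : 2 < #|[set p | inc p C]| by rewrite (block_card spbibd).
have point_gt1 := point_card_gt1 spbibd qsym.
have nonflag := spbibd_nonflag_collinear spbibd qsym k_gt2.
have [L [z zL]] := exists_nonflag spbibd qsym.
split; last exact: (not_two_hom linear block_gt2 point_gt1 nonflag zL).
case=> _ [p [q [pq lam0]]].
have npq : ~~ collinear inc p q by rewrite -lam_gt0 lam0.
have design : is_design inc v b r k by case: spbibd.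
split=> [/(almost_2_hom_triangle_free linear block_gt2 pq npq) | /(GQ_triangle_free linear)].
  exact: (triangle_free_GQ linear block_gt2 point_gt1 nonflag design).
exact: (triangle_free_almost_2_hom linear block_gt2 point_gt1 nonflag).
Qed.
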